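(* Let $\frac12\le\alpha\le1$ and let $M\in\mathcal{M}^*_{\mathcal{R}}(\alpha)$ be a row-Latin array of order $n$. Then there exists a cell $(i,j)$ such that $M_{ij}$ is a clone and $|R_i(M)\cup C_j(M)|\ge 2\alpha n-1$.
   Context: An array of order $n$ is an $n\times n$ array with a symbol in each cell; an entry is a triple $(i,j,A_{ij})$. An array is row-Latin if no symbol appears more than once in any row; $\mathcal{R}$ denotes the class of all square row-Latin arrays. A transversal of an $m\times m$ array is a set of $m$ entries, no two agreeing in row, column, or symbol; an array is transversal-free if it has no transversal. A symbol is a singleton if it occurs exactly once in the array and a clone otherwise; $M_{ij}$ is called a singleton/clone according to the symbol in cell $(i,j)$. $R_i(M)$, $C_j(M)$ are the sets of symbols in row $i$ and column $j$. For $\frac12\le\alpha\le1$, $\mathcal{M}_{\mathcal{R}}(\alpha)$ is the set of transversal-free arrays in $\mathcal{R}$ whose number of distinct symbols is at least $\alpha$ times the number of cells, and $\mathcal{M}^*_{\mathcal{R}}(\alpha)$ consists of those $A\in\mathcal{M}_{\mathcal{R}}(\alpha)$ such that no array in $\mathcal{M}_{\mathcal{R}}(\alpha)$ has smaller order than $A$, and no array in $\mathcal{M}_{\mathcal{R}}(\alpha)$ of the same order as $A$ has more distinct symbols than $A$. *)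

From HB Require Import structures.
From mathcomp Require Import all_boot all_order all_algebra.
Set Implicit Arguments. Unset Strict Implicit. Unset Printing Implicit Defensive.
Import Order.TTheory GRing.Theory Num.Theory.

Definition array (n : nat) := 'I_n -> 'I_n -> nat.

Definition row_latin n (A : array n) : Prop :=
  forall (i j1 j2 : 'I_n), A i j1 = A i j2 -> j1 = j2.

Definition is_transversal n (A : array n) (T : {set 'I_n * 'I_n}) : Prop :=
  #|T| = n /\
  forall c d, c \in T -> d \in T -> c <> d ->
    [/\ c.1 <> d.1, c.2 <> d.2 & A c.1 c.2 <> A d.1 d.2].

Definition transversal_free n (A : array n) : Prop :=
  forall T : {set 'I_n * 'I_n}, ~ is_transversal A T.

Definition entries n (A : array n) : seq nat :=
  [seq A i j | i <- enum 'I_n, j <- enum 'I_n].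
Definition nsym n (A : array n) : nat := size (undup (entries A)).

Definition rowsyms n (A : array n) (i : 'I_n) : seq nat := [seq A i j | j <- enum 'I_n].
Definition colsyms n (A : array n) (j : 'I_n) : seq nat := [seq A i j | i <- enum 'I_n].

Definition rowcol_card n (A : array n) (i j : 'I_n) : nat :=
  size (undup (rowsyms A i ++ colsyms A j)).

Definition is_clone n (A : array n) (i j : 'I_n) : Prop :=
  (1 < count_mem (A i j) (entries A))%N.

Definition inM (R : realFieldType) (alpha : R) n (A : array n) : Prop :=
  row_latin A /\ transversal_free A /\
  (alpha * (n * n)%:R <= (nsym A)%:R)%R.

Definition inMstar (R : realFieldType) (alpha : R) n (A : array n) : Prop :=
  inM alpha A /\
  (forall m (B : array m), inM alpha B -> (n <= m)%N) /\
  (forall B : array n, inM alpha B -> (nsym B <= nsym A)%N).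

From Pilot Require Import Defs.
From HB Require Import structures.
From mathcomp Require Import all_boot all_order all_algebra all_fingroup.
From Stdlib Require Import Classical.
From mathcomp Require Import zify lra.
Import Order.TTheory GRing.Theory Num.Theory.
Set Implicit Arguments. Unset Strict Implicit. Unset Printing Implicit Defensive.

(* If some column q holds a singleton at (p,q) and a clone at
   (i,q), delete row p and column q: the result is still row-Latin and
   transversal-free (a transversal of it extends by the singleton (p,q)), so by
   minimality of n it has fewer than a(n-1)^2 symbols.  The symbols lost by the
   deletion inject into R_i u C_q, whence |R_i u C_q| > a(2n-1) >= 2an - 1.
   Otherwise every column consists of singletons only or of clones only; let B
   be the set of clone columns.  If n <= 2|B|, counting the an^2 symbols column
   by column forces the bound at some (i0,c) with c in B.  If 2|B| <= n + 1, an
   alternating-path argument gives distinct rows s(c), c in B, carrying distinct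
   symbols, and the singleton columns complete this to a transversal. *)

Lemma permM_tpermL (T : finType) (s : {perm T}) z u : (s * tperm (s z) u)%g z = u.
Proof. by rewrite permM tpermL. Qed.

Lemma permM_tpermD (T : finType) (s : {perm T}) z u c :
  c != z -> s c != u -> (s * tperm (s z) u)%g c = s c.
Proof. by move=> cz scu; rewrite permM tpermD // ?(inj_eq perm_inj) // eq_sym. Qed.

Lemma leq_card_in_image (T : finType) (U : eqType) (f g : T -> U) (A B : {set T}) :
  {in A &, injective f} -> {in A, forall a, exists2 b, b \in B & g b = f a} ->
  (#|A| <= #|B|)%N.
Proof.
move=> f_inj fAgB; rewrite !cardE -(size_map f) -(size_map g).
apply: uniq_leq_size => [|_ /mapP [a aA ->]].
  by rewrite map_inj_in_uniq ?enum_uniq // => a b; rewrite !mem_enum; apply: f_inj.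
by rewrite mem_enum in aA; have [b bB <-] := fAgB a aA; rewrite map_f ?mem_enum.
Qed.

Definition is_singleton n (A : array n) (i j : 'I_n) : bool :=
  (count_mem (A i j) (entries A) <= 1)%N.

Lemma is_cloneE n (A : array n) i j : is_clone A i j <-> ~~ is_singleton A i j.
Proof. by rewrite /is_clone ltnNge. Qed.

Lemma count_entries n (A : array n) x :
  count_mem x (entries A) = \sum_(ij : 'I_n * 'I_n) (A ij.1 ij.2 == x).
Proof.
rewrite -(pair_bigA _ (fun i j => nat_of_bool (A i j == x))) /entries.
rewrite count_flatten -map_comp sumnE big_map big_enum /=.
by apply: eq_bigr => i _; rewrite count_map -big_enum /= -sum1_count big_mkcond.
Qed.

Lemma is_singleton_eq n (A : array n) p q i j :
  is_singleton A p q -> A i j = A p q -> (i, j) = (p, q).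
Proof.
move=> single Aij; apply/eqP; apply: contraTT single => ij_pq.
rewrite /is_singleton count_entries (bigD1 (p, q)) //= eqxx.
by rewrite (bigD1 (i, j)) //= Aij eqxx.
Qed.

Lemma mem_entries n (A : array n) i j : A i j \in entries A.
Proof. by apply/allpairsP; exists (i, j); rewrite !mem_enum. Qed.

Lemma entriesP n (A : array n) x : x \in entries A -> exists i j, x = A i j.
Proof. by case/allpairsP => -[i j] /= [_ _ ->]; exists i, j. Qed.

Section Rainbow.
Variables (n : nat) (M : array n).
Hypothesis M_latin : row_latin M.

Definition rainbow_on (S : {set 'I_n}) (s : {perm 'I_n}) : Prop :=
  {in S &, injective (fun c => M (s c) c)}.

Lemma rainbow_on_swap (S : {set 'I_n}) z u (s : {perm 'I_n}) :
  rainbow_on (S :\ z) s ->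
  {in S :\ z, forall c, s c != u /\ M (s c) c != M u z} ->
  rainbow_on S (s * tperm (s z) u)%g.
Proof.
move=> rainbow fresh.
have off c : c \in S -> c != z -> (s * tperm (s z) u)%g c = s c.
  by move=> cS cz; rewrite permM_tpermD //; case: (fresh c); rewrite ?inE ?cz.
move=> c d cS dS /=.
have [-> | cz] := eqVneq c z; have [-> | dz] := eqVneq d z => //.
- have /fresh[_] : d \in S :\ z by rewrite !inE dz dS.
  by rewrite permM_tpermL off // => /negP + Md; rewrite Md.
- have /fresh[_] : c \in S :\ z by rewrite !inE cz cS.
  by rewrite permM_tpermL off // => /negP + Mc; rewrite Mc.
- by rewrite !off //; apply: rainbow; rewrite !inE ?cz ?dz.
Qed.

Section Augmentation.
Variables (S : {set 'I_n}) (c0 : 'I_n) (s0 : {perm 'I_n}).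
Hypotheses (c0S : c0 \in S) (small_S : (2 * #|S| <= n + 1)%N).

Let S0 := S :\ c0.

(* If no rainbow assignment on S exists, every
   deformable pair (Z, W) yields one with a strictly larger Z, which is absurd. *)

Definition deformation (Z W : {set 'I_n}) (z : 'I_n) (s : {perm 'I_n}) : Prop :=
  [/\ rainbow_on (S :\ z) s,
      {in S :\: Z, forall c, s c = s0 c},
      {in S :\ z, forall c, s c \in s0 @: S0 :|: W} &
      {in S :\ z, forall c, exists2 d, d \in S0 & M (s c) c = M (s0 d) d}].

Definition deformable (Z W : {set 'I_n}) : Prop :=
  [/\ c0 \in Z, Z \subset S, (#|W| < #|Z|)%N &
      {in Z, forall z, exists s, deformation Z W z s}].

Lemma deformable_init : rainbow_on S0 s0 -> deformable [set c0] set0.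
Proof.
move=> rainbow; split; rewrite ?set11 ?sub1set ?cards0 ?cards1 //.
move=> z /set1P ->; exists s0; split => // c cS.
- by rewrite setU0 imset_f.
- by exists c.
Qed.

Lemma deformation_mono (Z W Z' W' : {set 'I_n}) z s :
  Z \subset Z' -> W \subset W' -> deformation Z W z s -> deformation Z' W' z s.
Proof.
move=> sZ sW [rainbow fixed rows syms]; split => // c.
- by move=> cSZ'; apply: fixed; move: cSZ'; apply: subsetP; apply: setDS.
- by move=> /rows; apply: subsetP; apply: setUS.
Qed.

Lemma deformable_free_row (Z W : {set 'I_n}) :
  deformable Z W -> exists u, u \notin s0 @: S0 :|: W.
Proof.
case=> c0Z sZS ltWZ _; apply/existsP; rewrite -negb_forall.
apply/negP => /forallP all_used.
have : (#|[set: 'I_n]| <= #|s0 @: S0| + #|W|)%N.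
  apply: leq_trans (leq_card_setU _ _).
  by apply: subset_leq_card; apply/subsetP => x _; apply: all_used.
rewrite cardsT card_ord.
have cardS : #|S| = #|S0|.+1 by rewrite (cardsD1 c0 S) c0S.
have := leq_imset_card s0 S0; have := subset_leq_card sZS; lia.
Qed.

Lemma deformation_grow (Z W : {set 'I_n}) z s u c :
  deformation Z W z s -> z \in Z -> u \notin s0 @: S0 :|: W ->
  c \in S :\ z -> c \notin Z -> M (s c) c = M u z ->
  deformation (c |: Z) (u |: W) c (s * tperm (s z) u)%g.
Proof.
move=> [rainbow fixed rows syms] zZ u_free cSz cZ Mc.
have su d : d \in S :\ z -> s d != u.
  by move=> /rows; apply: contraTneq => ->.
have off d : d \in S :\ z -> (s * tperm (s z) u)%g d = s d.
  by move=> dSz; rewrite permM_tpermD ?su //; case/setD1P: dSz.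
split.
- apply: rainbow_on_swap => [d e | d].
    by rewrite !inE => /and3P [dz dc dS] /and3P [ez ec eS]; apply: rainbow;
      rewrite !inE ?dz ?ez.
  rewrite !inE => /and3P [dz dc dS]; have dSz : d \in S :\ z by rewrite !inE dz.
  split; first exact: su.
  by rewrite -Mc; apply: contra_neq dc => /rainbow; apply.
- move=> d; rewrite !inE negb_or => /andP [/andP [_ dZ] dS].
  have dz : d != z by apply: contraNneq dZ => ->.
  by rewrite off ?fixed // !inE ?dZ ?dz.
- move=> d; rewrite !inE => /andP [dc dS]; have [-> | dz] := eqVneq d z.
    by rewrite permM_tpermL eqxx orbT.
  have /rows : d \in S :\ z by rewrite !inE dz.
  by rewrite off ?inE ?dz // => /orP [-> | ->]; rewrite ?orbT.
- move=> d; rewrite !inE => /andP [dc dS]; have [-> | dz] := eqVneq d z.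
    by rewrite permM_tpermL -Mc; apply: syms.
  by rewrite off ?inE ?dz //; apply: syms; rewrite !inE dz.
Qed.

Hypothesis no_rainbow : ~ exists s, rainbow_on S s.

Lemma deformable_clash (Z W : {set 'I_n}) u :
  deformable Z W -> u \notin s0 @: S0 :|: W ->
  (forall z s c, z \in Z -> deformation Z W z s -> c \in S :\ z ->
     M (s c) c = M u z -> c \in Z) ->
  {in Z, forall z, exists2 d, d \in Z :\ c0 & M (s0 d) d = M u z}.
Proof.
move=> [_ _ _ deformZ] u_free clash_in_Z z zZ.
have [s def] := deformZ z zZ; case: (def) => rainbow fixed rows syms.
have su c : c \in S :\ z -> s c != u by move=> /rows; apply: contraTneq => ->.
have [/existsP [c /andP [cSz /eqP Mc]] | no_clash] :=
  boolP [exists c in S :\ z, M (s c) c == M u z]; last first.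
  case: no_rainbow; exists (s * tperm (s z) u)%g; apply: rainbow_on_swap => // c cSz.
  split; first exact: su.
  by apply: contra no_clash => /eqP Mc; apply/existsP; exists c; rewrite cSz Mc eqxx.
have cZ := clash_in_Z z s c zZ def cSz Mc.
have [d /setD1P [dc0 dS] Md] := syms c cSz; exists d; last by rewrite -Md.
rewrite !inE dc0 /=; apply: contraTT cZ => dZ.
have dz : d != z by apply: contraNneq dZ => ->.
have dSz : d \in S :\ z by rewrite !inE dz.
by have -> : c = d by apply: rainbow; rewrite // Md fixed // !inE dZ.
Qed.

Lemma deformable_step (Z W : {set 'I_n}) :
  deformable Z W -> exists2 c, c \in S :\: Z & exists W', deformable (c |: Z) W'.
Proof.
move=> defZW; have [u u_free] := deformable_free_row defZW.
case: (defZW) => c0Z sZS ltWZ deformZ.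
case: (classic (exists z s c, [/\ z \in Z, deformation Z W z s, c \in S :\ z,
                                  c \notin Z & M (s c) c = M u z])).
  move=> [z [s [c [zZ def cSz cZ Mc]]]].
  have cS : c \in S by case/setD1P: cSz.
  exists c; first by rewrite inE cZ.
  exists (u |: W); split.
  - by rewrite !inE c0Z orbT.
  - by rewrite subUset sub1set cS.
  - rewrite cardsU1 (cardsU1 c Z) cZ add1n ltnS.
    exact: leq_trans (leq_add (leq_b1 _) (leqnn _)) ltWZ.
  move=> z' /setU1P [-> | z'Z].
    by exists (s * tperm (s z) u)%g; apply: deformation_grow.
  have [s' def'] := deformZ z' z'Z; exists s'.
  by apply: deformation_mono def'; apply: subsetUr.
move=> no_escape; exfalso.
have clash_in_Z z s c : z \in Z -> deformation Z W z s -> c \in S :\ z ->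
    M (s c) c = M u z -> c \in Z.
  move=> zZ def cSz Mc; apply/negPn/negP => cZ.
  by apply: no_escape; exists z, s, c.
have u_latin : {in Z &, injective (M u)} by move=> z1 z2 _ _ /M_latin.
have := leq_card_in_image u_latin (deformable_clash defZW u_free clash_in_Z).
by rewrite (cardsD1 c0 Z) c0Z add1n ltnn.
Qed.

Lemma not_deformable (Z W : {set 'I_n}) : ~ deformable Z W.
Proof.
move: {2}#|S :\: Z| (leqnn #|S :\: Z|) => k.
elim: k Z W => [|k IH] Z W le_k defZW; have [c cSZ [W' defcZ]] := deformable_step defZW.
  by move: le_k; rewrite leqn0 cards_eq0 => /eqP SZ0; rewrite SZ0 inE in cSZ.
apply: IH defcZ; rewrite -ltnS; apply: leq_trans le_k; apply: proper_card.
apply/properP; split; first by apply: setDS; apply: subsetUr.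
by exists c => //; rewrite !inE eqxx.
Qed.

End Augmentation.

Lemma rainbow_on_extend (S : {set 'I_n}) c0 s0 :
  c0 \in S -> (2 * #|S| <= n + 1)%N -> rainbow_on (S :\ c0) s0 ->
  exists s, rainbow_on S s.
Proof.
move=> c0S small_S rainbow; apply: NNPP => no_rainbow.
exact: not_deformable c0S small_S no_rainbow _ _ (deformable_init c0S rainbow).
Qed.

Lemma rainbow_exists (S : {set 'I_n}) :
  (2 * #|S| <= n + 1)%N -> exists s, rainbow_on S s.
Proof.
move: {2}#|S| (erefl #|S|) => k; elim: k S => [|k IH] S cardS small_S.
  by exists 1%g => c d; move/eqP: cardS; rewrite cards_eq0 => /eqP ->; rewrite inE.
have [c0 c0S] : exists c0, c0 \in S by apply/card_gt0P; rewrite cardS.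
have cardS0 : #|S :\ c0| = k by move: cardS; rewrite (cardsD1 c0 S) c0S add1n => -[].
have small_S0 : (2 * #|S :\ c0| <= n + 1)%N.
  by apply: leq_trans small_S; rewrite leq_mul2l subset_leq_card ?subsetDl ?orbT.
have [s0 rainbow] := IH _ cardS0 small_S0.
exact: rainbow_on_extend c0S small_S rainbow.
Qed.

End Rainbow.

Lemma rainbow_transversal n (M : array n) (B : {set 'I_n}) (s : {perm 'I_n}) :
  rainbow_on M B s -> {in ~: B, forall c i, is_singleton M i c} ->
  Defs.is_transversal M [set (s c, c) | c : 'I_n]. (* not finset.is_transversal *)
Proof.
move=> rainbow single; split; first by rewrite card_imset ?card_ord // => c d [].
move=> _ _ /imsetP [c _ ->] /imsetP [d _ ->] cd_ne /=.
have cd : c != d by apply: contra_not_neq cd_ne => ->.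
split; [by move/perm_inj; apply/eqP | by apply/eqP |].
have [cB | cB] := boolP (c \in B); last first.
  have /single/(_ (s c)) c_single : c \in ~: B by rewrite inE.
  by move/esym/(is_singleton_eq c_single) => -[_ dc]; rewrite dc eqxx in cd.
have [dB | dB] := boolP (d \in B); last first.
  have /single/(_ (s d)) d_single : d \in ~: B by rewrite inE.
  by move/(is_singleton_eq d_single) => -[_ cd']; rewrite cd' eqxx in cd.
by move/rainbow => /(_ cB dB) cd'; rewrite cd' eqxx in cd.
Qed.

Section DeleteRowColumn.
Variables (n : nat) (A : array n.+1) (p q : 'I_n.+1).

Definition del_rowcol : array n := fun i j => A (lift p i) (lift q j).

Lemma row_latin_del : row_latin A -> row_latin del_rowcol.
Proof. by move=> A_latin i j1 j2 /A_latin /lift_inj. Qed.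

Lemma transversal_free_del :
  transversal_free A -> is_singleton A p q -> transversal_free del_rowcol.
Proof.
move=> A_free pq_single T [cardT T_apart].
pose lift_cell (x : 'I_n * 'I_n) := (lift p x.1, lift q x.2).
have lift_cell_inj : injective lift_cell.
  move=> [a b] [c d] E.
  by rewrite [a](lift_inj (congr1 fst E)) [b](lift_inj (congr1 snd E)).
have pq_apart x : [/\ p <> (lift_cell x).1, q <> (lift_cell x).2 &
                      A p q <> A (lift_cell x).1 (lift_cell x).2].
  have p_lift := neq_lift p x.1; have q_lift := neq_lift q x.2.
  split; [exact/eqP | exact/eqP |].
  by move/esym/(is_singleton_eq pq_single) => -[p_eq _]; rewrite p_eq eqxx in p_lift.
apply: (A_free ((p, q) |: lift_cell @: T)); split.
  have pq_new : (p, q) \notin lift_cell @: T.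
    by apply/imsetP => -[x _ /(congr1 fst) p_eq]; case: (pq_apart x).
  by rewrite cardsU1 pq_new card_imset // cardT.
move=> a b /setU1P [-> | /imsetP [x xT ->]] /setU1P [-> | /imsetP [y yT ->]] ab.
- by [].
- by have [] := pq_apart y.
- by have [*] := pq_apart x; split; apply/nesym.
have /T_apart : x <> y by move=> xy; apply: ab; rewrite xy.
by case/(_ xT yT) => r c s; split => /= [/lift_inj | /lift_inj |].
Qed.

Lemma del_rowcol_missing r c :
  A r c \notin entries del_rowcol -> r = p \/ c = q.
Proof.
case: (unliftP p r) => [r' -> | ->]; last by left.
case: (unliftP q c) => [c' -> | ->]; last by right.
by rewrite (mem_entries del_rowcol r' c').
Qed.

Definition lost_symbols : seq nat :=
  [seq x <- undup (entries A) | x \notin entries del_rowcol].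

Lemma nsym_le_lost : (nsym A <= nsym del_rowcol + size lost_symbols)%N.
Proof.
rewrite /nsym /lost_symbols size_filter.
rewrite -(count_predC (mem (entries del_rowcol))) leq_add2r -size_filter.
apply: uniq_leq_size; first by rewrite filter_uniq ?undup_uniq.
by move=> x; rewrite mem_filter !mem_undup => /andP [].
Qed.

Lemma size_lost_symbols i :
  row_latin A -> i != p -> (size lost_symbols <= rowcol_card A i q)%N.
Proof.
move=> A_latin ip; set C := colsyms A q.
have inC r : A r q \in C by rewrite map_f ?mem_enum.
(* A lost symbol outside column q lies in row p, at column col x; it is sent to
   the entry A i (col x) of row i, which cannot be a lost symbol of column q. *)
pose col x := odflt q [pick l | A p l == x].
have colP x : x \in lost_symbols -> x \notin C -> A p (col x) = x.
  rewrite mem_filter mem_undup => /andP [x_lost /entriesP [r [c Ex]]] xC.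
  rewrite Ex in x_lost xC *; have [-> | cq] := del_rowcol_missing x_lost.
    by rewrite /col; case: pickP => [l /eqP // | /(_ c)]; rewrite eqxx.
  by rewrite cq inC in xC.
have col_q x : x \in lost_symbols -> x \notin C -> col x != q.
  move=> x_lost xC; apply/eqP => cq; have := colP x x_lost xC.
  by rewrite cq => Apq; rewrite -Apq inC in xC.
pose phi x := if x \in C then x else A i (col x).
have phi_inj : {in lost_symbols &, injective phi}.
  suff mixed x y : x \in lost_symbols -> y \in lost_symbols ->
      x \in C -> y \notin C -> x != A i (col y).
    move=> x y xL yL; rewrite /phi.
    case: ifPn => xC; case: ifPn => yC; first by [].
    - by move=> Ex; have := mixed _ _ xL yL xC yC; rewrite Ex eqxx.
    - by move=> Ey; have := mixed _ _ yL xL yC xC; rewrite -Ey eqxx.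
    by move/A_latin => cxy; rewrite -(colP x) // -(colP y) // cxy.
  move=> xL yL xC yC; apply/eqP => Ex; move: xL; rewrite mem_filter Ex.
  case/andP => /del_rowcol_missing [ip' | ]; first by rewrite ip' eqxx in ip.
  by move/eqP; rewrite (negbTE (col_q y yL yC)).
rewrite -(size_map phi) /rowcol_card; apply: uniq_leq_size.
  by rewrite map_inj_in_uniq ?filter_uniq ?undup_uniq.
move=> _ /mapP [x xL ->]; rewrite mem_undup mem_cat /phi.
by case: ifP => [-> | _]; rewrite ?orbT // map_f ?mem_enum.
Qed.

End DeleteRowColumn.

Lemma nsym_le_rowcol_sum n (M : array n) (B : {set 'I_n}) i0 : row_latin M ->
  (nsym M + n * #|B| <= n * #|~: B| + #|B| + \sum_(c in B) rowcol_card M i0 c)%N.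
Proof.
move=> M_latin; set R := rowsyms M i0.
have R_uniq : uniq R by rewrite map_inj_uniq ?enum_uniq // => j1 j2 /M_latin.
have size_R : size R = n by rewrite size_map size_enum_ord.
(* Every symbol occurs in a column outside B, in row i0, or in some D c with
   c in B, and |D c| <= |R_i0 u C_c| - n. *)
pose D c := [seq x <- undup (colsyms M c) | x \notin R].
have size_D c : (size (D c) + n <= rowcol_card M i0 c)%N.
  suff : (size (R ++ D c) <= rowcol_card M i0 c)%N by rewrite size_cat size_R addnC.
  apply: uniq_leq_size.
    rewrite cat_uniq R_uniq filter_uniq ?undup_uniq //= andbT.
    by apply/hasPn => x; rewrite mem_filter => /andP [].
  move=> x; rewrite mem_cat mem_undup mem_cat => /orP [-> // |].
  by rewrite mem_filter mem_undup => /andP [_ ->]; rewrite orbT.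
pose outside := [seq M i c | i <- enum 'I_n, c <- enum (~: B)].
pose in_row := [seq M i0 c | c <- enum B].
have cover : {subset undup (entries M) <= outside ++ in_row ++ flatten (map D (enum B))}.
  move=> _ /[!mem_undup] /entriesP [i [c ->]]; rewrite !mem_cat.
  have outsideP r d : d \notin B -> M r d \in outside.
    by move=> dB; apply: (allpairs_f (fun i c => M i c)); rewrite mem_enum ?inE.
  have [cB | cB] := boolP (c \in B); last by rewrite outsideP.
  have [/mapP [d _ ->] | cR] := boolP (M i c \in R).
    have [dB | dB] := boolP (d \in B); last by rewrite outsideP.
    by rewrite (map_f (fun c => M i0 c)) ?mem_enum ?orbT.
  apply/orP; right; apply/orP; right; apply/flattenP; exists (D c).
    by rewrite map_f ?mem_enum.
  by rewrite mem_filter cR mem_undup map_f ?mem_enum.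
have := uniq_leq_size (undup_uniq _) cover.
rewrite !size_cat size_allpairs !size_map -enumT size_enum_ord -!cardE size_flatten.
rewrite /shape -map_comp sumnE big_map big_enum /= => le_nsym.
have le_sum : (\sum_(c in B) (size (D c) + n) <= \sum_(c in B) rowcol_card M i0 c)%N.
  by apply: leq_sum => c _; apply: size_D.
rewrite big_split /= sum_nat_const in le_sum.
rewrite /nsym; apply: leq_trans (leq_add le_nsym (leqnn _)) _.
by rewrite -!addnA leq_add2l leq_add2l mulnC.
Qed.

Section Bounds.
Variables (R : realFieldType) (alpha : R).
Local Open Scope ring_scope.
Hypothesis alpha_le1 : alpha <= 1.

Lemma singleton_clone_column_bound n (M : array n) p q i :
  inMstar alpha M -> is_singleton M p q -> is_clone M i q ->
  2%:R * alpha * n%:R - 1 <= (rowcol_card M i q)%:R.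
Proof.
case: n M p q i => [|n] M p q i; first by case: p.
move=> [[M_latin [M_free dense]] [minimal _]] pq_single /is_cloneE iq_clone.
have ip : i != p by apply: contraNneq iq_clone => ->.
have sparse_del : (nsym (del_rowcol M p q))%:R < alpha * (n * n)%:R.
  rewrite ltNge; apply/negP => dense_del.
  suff : (n.+1 <= n)%N by rewrite ltnn.
  apply: (minimal _ (del_rowcol M p q)).
  by split; [apply: row_latin_del | split; [apply: transversal_free_del |]].
have lost : (nsym M <= nsym (del_rowcol M p q) + rowcol_card M i q)%N.
  by apply: leq_trans (nsym_le_lost M p q) _; rewrite leq_add2l size_lost_symbols.
have succ_n : (n.+1)%:R = n%:R + 1 :> R by rewrite -addn1 natrD.
move: lost dense sparse_del; rewrite -(ler_nat R) !natrD !natrM succ_n => *.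
have := alpha_le1; nra.
Qed.

Lemma clone_columns_bound n (M : array n) (B : {set 'I_n}) i0 :
  row_latin M -> alpha * (n * n)%:R <= (nsym M)%:R -> (n <= 2 * #|B|)%N ->
  exists2 c, c \in B & 2%:R * alpha * n%:R - 1 <= (rowcol_card M i0 c)%:R.
Proof.
move=> M_latin dense large.
have [c /andP [cB ok] | none] :=
  pickP [pred c | (c \in B) && (2%:R * alpha * n%:R - 1 <= (rowcol_card M i0 c)%:R)].
  by exists c.
exfalso; have [c0 c0B] : exists c0, c0 \in B.
  by apply/card_gt0P; move: large (ltn_ord i0); lia.
have sum_lt : \sum_(c in B) (rowcol_card M i0 c)%:R <
              \sum_(c in B) (2%:R * alpha * n%:R - 1) :> R.
  apply: ltr_sum => [|c cB]; first by apply/hasP; exists c0; rewrite ?mem_index_enum.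
  by rewrite ltNge; apply: contraFN (none c) => ok; rewrite /= cB ok.
rewrite sumr_const -natr_sum -mulr_natr in sum_lt.
have card_split : #|B|%:R + #|~: B|%:R = n%:R :> R by rewrite -natrD cardsC card_ord.
have large_R : n%:R <= 2%:R * #|B|%:R :> R by rewrite -natrM ler_nat.
have : 0 <= n%:R * (1 - alpha) * (2%:R * #|B|%:R - n%:R).
  by rewrite !mulr_ge0 ?subr_ge0.
have := @nsym_le_rowcol_sum _ M B i0 M_latin.
rewrite -(ler_nat R) !natrD !natrM => *; move: dense; rewrite natrM => *.
nra.
Qed.

End Bounds.

Theorem mainTheorem8 (R : realFieldType) (alpha : R)
  (Ha1 : (2%:R^-1 <= alpha)%R) (Ha2 : (alpha <= 1)%R)
  (n : nat) (M : array n) (HM : inMstar alpha M) :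
  exists i j : 'I_n, is_clone M i j /\
    (2%:R * alpha * n%:R - 1 <= (rowcol_card M i j)%:R)%R.
Proof.
have [[p [q [i [pq_single iq_clone]]]] | pure] :=
  classic (exists p q i, is_singleton M p q /\ is_clone M i q).
  by exists i, q; split; last exact: singleton_clone_column_bound HM pq_single iq_clone.
case: HM => [[M_latin [M_free dense]] _].
pose B := [set c | [exists i, ~~ is_singleton M i c]].
have single_off_B : {in ~: B, forall c i, is_singleton M i c}.
  by move=> c; rewrite !inE negb_exists => /forallP single i; apply/negbNE/single.
have clone_in_B : {in B, forall c i, is_clone M i c}.
  move=> c; rewrite inE => /existsP [i' /is_cloneE clone'] i; apply/is_cloneE/negP.
  by move=> single; apply: pure; exists i, c, i'.
have [small | large] := leqP (2 * #|B|) (n + 1).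
  have [s rainbow] := rainbow_exists M_latin small.
  by case: (M_free _ (rainbow_transversal rainbow single_off_B)).
have [c0 c0B] : exists c0, c0 \in B by apply/card_gt0P; move: large; lia.
have large_B : (n <= 2 * #|B|)%N by lia.
have [c cB bound] := clone_columns_bound Ha2 c0 M_latin dense large_B.
by exists c0, c; split; first exact: clone_in_B.
Qed.
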